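(* Let $d\in\mathbb{N}$, let $A$ be a $d\times d$ reclusive matrix, $\mathcal{P}_{A}$ its reclusive partition, and $\Delta_{A}$ its reclusive distance. Then for every $\vec{p}\in\mathbb{R}^{d}$, $|\mathcal{N}_{\Delta_{A}/2}(\vec{p})|\leq d+1$.
   Context: A $d\times d$ matrix $A=(a_{ij})$ is reclusive if $a_{ij}=0$ for $i>j$, $a_{ii}=1$ for all $i$, and $a_{ij}>a_{ik}>0$ for all $i\le j<k$. Its lattice is $L_A=\{A\vec{v}:\vec{v}\in\mathbb{Z}^d\}$ and its reclusive partition is $\mathcal{P}_A=\{\vec{a}+[0,1)^d:\vec{a}\in L_A\}$ (a partition of $\mathbb{R}^d$). Its reclusive distance is $\Delta_A=\min\{\delta_1,\delta_2,\delta_3,\delta_4\}$ where $\delta_1=1$, $\delta_2=\min_{k\in[d]}\min_{k<j\le d}(1-a_{kj})$, $\delta_3=\min_{k\in[d]}\min_{k<j\le d}a_{kj}$, $\delta_4=\min_{k\in[d]}\min_{k<j<j'\le d}(a_{kj}-a_{kj'})$, with $\min\emptyset=\infty$. On $\mathbb{R}^d$ use $d_{max}(\vec{x},\vec{y})=\max_i|x_i-y_i|$, $\overline{B}_{\epsilon}(\vec{p})=\{\vec{x}:d_{max}(\vec{x},\vec{p})\le\epsilon\}$ and $\mathcal{N}_{\epsilon}(\vec{p})=\{X\in\mathcal{P}_A: X\cap\overline{B}_{\epsilon}(\vec{p})\neq\emptyset\}$. *)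

From HB Require Import structures.
From mathcomp Require Import all_boot all_order all_algebra.
From mathcomp Require Import boolp classical_sets functions cardinality reals constructive_ereal.
Set Implicit Arguments. Unset Strict Implicit. Unset Printing Implicit Defensive.
Import Order.TTheory GRing.Theory Num.Theory.
Local Open Scope ring_scope.
Local Open Scope classical_set_scope.

Section Reclusive.
Variable R : realType.
Variable d : nat.

Definition reclusive (A : 'M[R]_d) : Prop :=
  [/\ (forall i j : 'I_d, (j < i)%N -> A i j = 0),
      (forall i : 'I_d, A i i = 1) &
      (forall i j k : 'I_d, (i <= j)%N -> (j < k)%N -> A i j > A i k /\ A i k > 0)].

Definition lattice (A : 'M[R]_d) : set ('I_d -> R) :=
  [set a | exists v : 'I_d -> int, a = fun i => \sum_(j < d) A i j * (v j)%:~R].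

Definition tile (a : 'I_d -> R) : set ('I_d -> R) :=
  [set x | forall i, a i <= x i < a i + 1].

Definition reclusive_partition (A : 'M[R]_d) : set (set ('I_d -> R)) :=
  [set X | exists2 a, lattice A a & X = tile a].

Definition cball (eps : R) (p : 'I_d -> R) : set ('I_d -> R) :=
  [set x | forall i, `|x i - p i| <= eps].

Definition neighbours (A : 'M[R]_d) (eps : R) (p : 'I_d -> R) : set (set ('I_d -> R)) :=
  [set X | reclusive_partition A X /\ X `&` cball eps p !=set0].

(* Reclusive distance, with min over the empty set = +oo. *)
Local Open Scope ereal_scope.
Definition rdelta1 : \bar R := 1%:E.
Definition rdelta2 (A : 'M[R]_d) : \bar R :=
  \big[Order.min/+oo]_(k < d) \big[Order.min/+oo]_(j < d | (k < j)%N) (1 - A k j)%:E.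
Definition rdelta3 (A : 'M[R]_d) : \bar R :=
  \big[Order.min/+oo]_(k < d) \big[Order.min/+oo]_(j < d | (k < j)%N) (A k j)%:E.
Definition rdelta4 (A : 'M[R]_d) : \bar R :=
  \big[Order.min/+oo]_(k < d) \big[Order.min/+oo]_(j < d | (k < j)%N)
     \big[Order.min/+oo]_(j' < d | (j < j')%N) (A k j - A k j')%:E.
Definition rdist (A : 'M[R]_d) : \bar R :=
  Order.min (Order.min rdelta1 (rdelta2 A)) (Order.min (rdelta3 A) (rdelta4 A)).
End Reclusive.

From HB Require Import structures.
From mathcomp Require Import all_boot all_order all_algebra.
From mathcomp Require Import boolp classical_sets functions cardinality reals constructive_ereal.
From mathcomp Require Import zify lra.
Import Order.TTheory GRing.Theory Num.Theory.
Set Implicit Arguments. Unset Strict Implicit. Unset Printing Implicit Defensive.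
Local Open Scope ring_scope.
Local Open Scope classical_set_scope.
Local Open Scope card_scope.

(* If two tiles a + [0,1)^d and b + [0,1)^d, with a = A v and b = A w, both meet the
   ball of radius D/2 about p, where D = Delta_A, then every row of u = v - w satisfies
   |u_k + sum_(j > k) a_kj u_j| < 1 + D.  Reading u from its last entry backwards, the
   inequalities defining Delta_A force u in {-1,0,1}^d and make consecutive nonzero
   entries of u alternate in sign: if u_f is the first nonzero entry after k, then for
   i <= k the tail sum_(j > k) a_ij u_j has the sign of u_f and modulus in [D, a_if].
   A family of integer vectors with these two pairwise properties has at most d + 1
   members: label v by the least k such that another member agrees with v above k and is
   smaller at k (or by d if there is none); alternation makes this label injective. *)

Section ReclusiveDistance.
Variables (R : realType) (d : nat).

Definition reclusive_gap (A : 'M[R]_d) (D : R) : Prop :=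
  [/\ 0 <= D <= 1,
      (forall i j : 'I_d, (i < j)%N -> D <= A i j /\ D <= 1 - A i j) &
      (forall i j j' : 'I_d, (i < j)%N -> (j < j')%N -> D <= A i j - A i j')].

Lemma reclusive_entry_gt0 (A : 'M[R]_d) (i j : 'I_d) : reclusive A -> (i < j)%N ->
  0 < A i j /\ 0 < 1 - A i j.
Proof.
by case=> _ Adiag Adec ij; have [] := Adec i i j (leqnn i) ij; rewrite Adiag subr_gt0.
Qed.

Lemma rdist_gt0 (A : 'M[R]_d) : reclusive A -> (0 < rdist A)%E.
Proof.
move=> rA; have [_ _ Adec] := rA.
rewrite /rdist /rdelta1 !lt_min lte_fin ltr01 /=.
apply/and3P; split; apply: lt_bigmin => [|k _]; rewrite ?ltry //;
  apply: lt_bigmin => [|j kj]; rewrite ?ltry //; try by rewrite lte_fin; have [] := reclusive_entry_gt0 rA kj.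
apply: lt_bigmin => [|j' jj']; rewrite ?ltry // lte_fin subr_gt0.
by have [] := Adec k j j' (ltnW kj) jj'.
Qed.

Lemma reclusive_gap_rdist (A : 'M[R]_d) : reclusive A -> reclusive_gap A (fine (rdist A)).
Proof.
move=> rA; have := rdist_gt0 rA.
have le1 : (rdist A <= 1%:E)%E by rewrite /rdist !ge_min lexx.
have le2 (i j : 'I_d) : (i < j)%N -> (rdist A <= (1 - A i j)%:E)%E.
  move=> ij; rewrite /rdist !ge_min; apply/orP; left; apply/orP; right.
  exact: le_trans (bigmin_le _ i _) (bigmin_le_cond _ _ ij).
have le3 (i j : 'I_d) : (i < j)%N -> (rdist A <= (A i j)%:E)%E.
  move=> ij; rewrite /rdist !ge_min; apply/orP; right; apply/orP; left.
  exact: le_trans (bigmin_le _ i _) (bigmin_le_cond _ _ ij).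
have le4 (i j j' : 'I_d) : (i < j)%N -> (j < j')%N -> (rdist A <= (A i j - A i j')%:E)%E.
  move=> ij jj'; rewrite /rdist !ge_min; apply/orP; right; apply/orP; right.
  apply: le_trans (bigmin_le _ i _) _; apply: le_trans (bigmin_le_cond _ _ ij) _.
  exact: bigmin_le_cond.
move: le1 le2 le3 le4; case: (rdist A) => [r| |] //= r1 r2 r3 r4 r0.
split; first by rewrite -!lee_fin ltW.
- by move=> i j ij; rewrite -!lee_fin; split; [apply: r3 | apply: r2].
- by move=> i j j' ij jj'; rewrite -lee_fin; apply: r4.
Qed.
End ReclusiveDistance.

Section Tail.
Variables (R : realType) (d : nat) (A : 'M[R]_d) (u : 'I_d -> int).

Definition tail (i : 'I_d) (n : nat) : R := \sum_(j < d | (n <= j)%N) A i j * (u j)%:~R.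

Lemma tailS (i k : 'I_d) : tail i k = A i k * (u k)%:~R + tail i k.+1.
Proof.
rewrite /tail (bigD1 k) //=; congr (_ + _); apply: eq_bigl => j.
by rewrite ltn_neqAle andbC eq_sym.
Qed.

Lemma tail_eq0 (i : 'I_d) (n : nat) : (forall j : 'I_d, (n <= j)%N -> u j = 0) -> tail i n = 0.
Proof. by move=> u0; rewrite /tail big1 // => j /u0 ->; rewrite mulr0. Qed.

Definition leads (n : nat) (f : 'I_d) : Prop :=
  [/\ (n <= f)%N, u f != 0 & forall j : 'I_d, (n <= j < f)%N -> u j = 0].

Lemma leadsP (k f : 'I_d) : leads k f -> f = k \/ leads k.+1 f /\ u k = 0.
Proof.
move=> [kf uf0 u0]; have [fk|kf'] := eqVneq f k; [by left | right].
have ltkf : (k < f)%N by rewrite ltn_neqAle kf andbT eq_sym; exact: kf'.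
split; last by apply: u0; rewrite leqnn.
by split=> // j /andP[kj jf]; apply: u0; rewrite jf ltnW.
Qed.

Lemma eq0_or_leads (n : nat) :
  (forall j : 'I_d, (n <= j)%N -> u j = 0) \/ exists f, leads n f.
Proof.
have [[j0 /andP[nj0 uj0]]|] := pselect (exists j : 'I_d, (n <= j)%N && (u j != 0)); last first.
  move=> nex; left=> j nj; apply/eqP/negPn/negP=> uj; apply: nex; exists j; exact/andP.
right; have P0 : (n <= j0)%N && (u j0 != 0) by rewrite nj0.
case: (@arg_minnP _ j0 (fun j : 'I_d => (n <= j)%N && (u j != 0)) val P0) => f /andP[nf uf] fmin.
exists f; split=> // j /andP[nj jf]; apply/eqP/negPn/negP=> uj.
by have := fmin j; rewrite nj uj leqNgt jf => /(_ isT).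
Qed.

Section Invariant.
Variable D : R.
Hypothesis gapAD : reclusive_gap A D.
Hypothesis row_bound : forall k : 'I_d, `|(u k)%:~R + tail k k.+1| < 1 + D.

Definition tail_inv (n : nat) : Prop :=
  (forall j : 'I_d, (n <= j)%N -> `|u j| <= 1) /\
  forall f, leads n f -> forall i : 'I_d, (i < n)%N -> D <= (u f)%:~R * tail i n <= A i f.

Lemma tail_inv_sign (k f : 'I_d) : tail_inv k.+1 -> leads k.+1 f -> -1 <= u f * u k <= 0.
Proof.
case: gapAD => _ gap2 _ [u1 tailP] lf.
have [kf uf0 _] := lf.
have /andP[tlo thi] := tailP f lf k (ltnSn k).
have [_ Akf] := gap2 k f kf.
have sf : u f = 1 \/ u f = -1 by have := u1 f kf; move: uf0; lia.
have := row_bound k; rewrite ltr_norml => /andP[rlo rhi].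
suff /andP[lo hi] : ((-2)%:~R < (u f * u k)%:~R :> R) && ((u f * u k)%:~R < 1 :> R).
  by rewrite ltr_int in lo; rewrite -[1]/(1%:~R) ltr_int in hi; lia.
case: sf tlo thi => -> tlo thi; rewrite ?intrN ?mul1r ?mulN1r in tlo thi *;
  apply/andP; split; lra.
Qed.

Lemma tail_inv_abs (k : 'I_d) : tail_inv k.+1 -> `|u k| <= 1.
Proof.
move=> IH; case: gapAD => /andP[_ D1] _ _.
have [u0|[g lg]] := eq0_or_leads k.+1.
  have := row_bound k; rewrite tail_eq0 // addr0 => uk.
  suff : `|u k|%:~R < 2%:~R :> R by rewrite ltr_int; lia.
  by rewrite intr_norm (lt_le_trans uk) //; lra.
have := tail_inv_sign IH lg; have [kg ug0 _] := lg.
have := (IH.1 g kg); move: ug0; lia.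
Qed.

Lemma tail_inv_self (k : 'I_d) : tail_inv k.+1 -> u k != 0 ->
  forall i : 'I_d, (i < k)%N -> D <= (u k)%:~R * tail i k <= A i k.
Proof.
move=> IH uk0 i ik; case: gapAD => /andP[D0 _] gap2 gap4.
have [Dik _] := gap2 i k ik.
have sk : u k * u k = 1 by have := tail_inv_abs IH; move: uk0; nia.
rewrite tailS mulrDr mulrCA -intrM sk mulr1.
have [u0|[g lg]] := eq0_or_leads k.+1; first by rewrite tail_eq0 // mulr0 addr0 Dik lexx.
have [kg ug0 _] := lg.
have sg : u g = - u k.
  by have := tail_inv_sign IH lg; have := IH.1 g kg; move: ug0 sk; nia.
have := IH.2 g lg i (ltnW ik); rewrite sg intrN mulNr => /andP[tlo thi].
by have := gap4 i k g ik kg; lra.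
Qed.

Lemma tail_inv_step (k : 'I_d) : tail_inv k.+1 -> tail_inv k.
Proof.
move=> IH; split=> [j|f lf i ik].
  rewrite leq_eqVlt => /orP[/eqP kj|]; last exact: IH.1.
  by rewrite (_ : j = k); [exact: tail_inv_abs | exact: val_inj].
have [fk|[lf' uk0]] := leadsP lf; first by have [_ uf0 _] := lf; subst f; exact: tail_inv_self.
by rewrite tailS uk0 mulr0 add0r; apply: IH.2 => //; exact: ltnW.
Qed.

Lemma tail_invW (n : nat) : (n <= d)%N -> tail_inv n.
Proof.
move=> nd; rewrite -(subKn nd); elim: (d - n)%N (leq_subr n d) => [_|m IH md].
  by rewrite subn0; split=> [j|f [+ _ _]]; rewrite leqNgt ltn_ord.
have ltd : (d - m.+1 < d)%N by lia.
have -> : (d - m.+1 = Ordinal ltd)%N by [].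
apply: tail_inv_step; rewrite /= -subSn //; apply: IH; exact: ltnW.
Qed.

Lemma bounded_rows_abs_le1 (j : 'I_d) : `|u j| <= 1.
Proof. by have [+ _] := tail_invW (leq0n d); apply. Qed.

Lemma bounded_rows_alternate (k f : 'I_d) : (k < f)%N -> 0 < u f ->
  (forall j : 'I_d, (k < j < f)%N -> u j = 0) -> u k <= 0.
Proof.
move=> kf uf0 u0; have lf : leads k.+1 f by split=> //; rewrite gt_eqF.
have := tail_inv_sign (tail_invW (ltn_ord k)) lf.
by have := bounded_rows_abs_le1 f; move: uf0; nia.
Qed.
End Invariant.
End Tail.

Section SplitLabel.
Variables (d : nat) (S : set ('I_d -> int)).
Hypothesis S_close : forall v w, S v -> S w -> forall j, `|v j - w j| <= 1.
Hypothesis S_alternate : forall v w, S v -> S w -> forall k f : 'I_d, (k < f)%N ->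
  (forall j : 'I_d, (k < j < f)%N -> v j = w j) -> w f < v f -> v k <= w k.

Definition splits (v : 'I_d -> int) (k : 'I_d) : Prop :=
  exists2 w, S w & (forall j : 'I_d, (k < j)%N -> w j = v j) /\ w k < v k.

Lemma splits_top_lt (v w : 'I_d -> int) (k f : 'I_d) : S v -> S w ->
  splits v k -> splits w k -> (k < f)%N ->
  (forall j : 'I_d, (k < j < f)%N -> v j = w j) -> ~ w f < v f.
Proof.
move=> Sv Sw [v' Sv' [v'v ltv]] [w' Sw' [w'w ltw]] kf agree wv.
have vkw' : v k <= w' k.
  apply: (S_alternate Sv Sw' kf) => [j /[dup] /andP[kj _] /agree ->|]; by rewrite w'w.
by have := S_close Sw Sv' k; lia.
Qed.

Lemma splits_agree (v w : 'I_d -> int) (k : 'I_d) : S v -> S w ->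
  splits v k -> splits w k -> forall j : 'I_d, (k < j)%N -> v j = w j.
Proof.
move=> Sv Sw sv sw j0 kj0.
apply/eqP/negPn/negP => vw0; have P0 : (k < j0)%N && (v j0 != w j0) by rewrite kj0.
case: (@arg_minnP _ j0 (fun j : 'I_d => (k < j)%N && (v j != w j)) val P0) => f /andP[kf vwf] fmin.
have agree (j : 'I_d) : (k < j < f)%N -> v j = w j.
  case/andP=> kj jf; apply/eqP/negPn/negP => vwj.
  by have := fmin j; rewrite kj vwj leqNgt jf => /(_ isT).
have [wv|vw] := ltP (w f) (v f); first exact: splits_top_lt sv sw kf agree wv.
apply: (splits_top_lt Sw Sv sw sv kf) => [j /agree //|].
by rewrite lt_neqAle vwf vw.
Qed.

Let splits_at (v : 'I_d -> int) (n : nat) : bool :=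
  (n == d) || `[< exists2 k : 'I_d, val k = n & splits v k >].

Let splits_at_d (v : 'I_d -> int) : exists n, splits_at v n.
Proof. by exists d; rewrite /splits_at eqxx. Qed.

Definition split_label (v : 'I_d -> int) : nat := ex_minn (splits_at_d v).

Lemma split_labelP (v : 'I_d -> int) :
  split_label v = d \/ exists2 k : 'I_d, split_label v = k & splits v k.
Proof.
rewrite /split_label; case: ex_minnP => n /orP[/eqP-> _|/asboolP[k <- skv] _]; first by left.
by right; exists k.
Qed.

Lemma split_label_min (v : 'I_d -> int) (k : 'I_d) : splits v k -> (split_label v <= k)%N.
Proof.
rewrite /split_label => skv; case: ex_minnP => n _; apply.
by apply/orP; right; apply/asboolP; exists k.
Qed.

Lemma split_label_le (v : 'I_d -> int) : (split_label v <= d)%N.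
Proof. by rewrite /split_label; case: ex_minnP => n _; apply; rewrite /splits_at eqxx. Qed.

Lemma split_label_neq (v w : 'I_d -> int) (k : 'I_d) : S v -> S w ->
  (forall j : 'I_d, (k < j)%N -> w j = v j) -> w k < v k -> split_label v <> split_label w.
Proof.
move=> Sv Sw wv wvk lvw; have svk : splits v k by exists w.
have lvk := split_label_min svk.
have [lvd|[k2 lv2 sv2]] := split_labelP v; first by move: lvk; rewrite lvd leqNgt ltn_ord.
have [lwd|[k1 lw1 sw1]] := split_labelP w; first by move: lvk; rewrite lvw lwd leqNgt ltn_ord.
have k21 : k2 = k1 by apply: val_inj; rewrite /= -lv2 -lw1.
subst k2; move: lvk; rewrite lv2 leq_eqVlt => /orP[/eqP k1E|k1k].
  have k1k : k1 = k by apply: val_inj.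
  subst k1; case: sw1 => w' Sw' [_ w'k].
  by have := S_close Sv Sw' k; lia.
have := splits_agree Sv Sw sv2 sw1 k1k => vwk.
by move: wvk; rewrite vwk ltxx.
Qed.

Lemma split_label_inj (v w : 'I_d -> int) : S v -> S w -> split_label v = split_label w -> v = w.
Proof.
move=> Sv Sw lvw; apply: funext => j0; apply/eqP/negPn/negP => vw0.
case: (@arg_maxnP _ j0 (fun j : 'I_d => v j != w j) val vw0) => k vwk kmax.
have wv (j : 'I_d) : (k < j)%N -> w j = v j.
  move=> kj; apply/eqP/negPn/negP; rewrite eq_sym => vwj.
  by have : (j <= k)%N := kmax j vwj; rewrite leqNgt kj.
have [wvk|] := ltP (w k) (v k); first exact: split_label_neq Sv Sw wv wvk lvw.
rewrite le_eqVlt (negbTE vwk) /= => vwk'.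
by apply: (split_label_neq Sw Sv _ vwk' (esym lvw)) => j /wv.
Qed.

Lemma alternating_card_le : S #<= `I_d.+1.
Proof.
apply/pcard_leP/injfunPex; exists split_label => [v _|v w]; first by rewrite /= ltnS split_label_le.
by rewrite !inE; exact: split_label_inj.
Qed.
End SplitLabel.

Section Tiles.
Variables (R : realType) (d : nat).
Implicit Types (A : 'M[R]_d) (v w : 'I_d -> int).

Definition lattice_point A v : 'I_d -> R := fun i => \sum_(j < d) A i j * (v j)%:~R.

Lemma lattice_pointB A v w (i : 'I_d) :
  lattice_point A v i - lattice_point A w i = lattice_point A (fun j => v j - w j) i.
Proof. by rewrite /lattice_point -sumrB; apply: eq_bigr => j _; rewrite intrB mulrBr. Qed.

Lemma reclusive_lattice_point A (u : 'I_d -> int) (k : 'I_d) : reclusive A ->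
  lattice_point A u k = (u k)%:~R + tail A u k k.+1.
Proof.
case=> Alow Adiag _; rewrite /lattice_point (bigID (fun j : 'I_d => (k <= j)%N)) /=.
rewrite [X in _ + X]big1 ?addr0 => [|j]; last by rewrite -ltnNge => /Alow ->; rewrite mul0r.
by rewrite -[X in X = _]/(tail A u k k) tailS Adiag mul1r.
Qed.

Lemma tile_close (a b x y : 'I_d -> R) (D : R) (k : 'I_d) :
  tile a x -> tile b y -> `|x k - y k| <= D -> `|a k - b k| < 1 + D.
Proof.
move=> /(_ k)/andP[ax xa] /(_ k)/andP[yb yb']; rewrite ler_norml ltr_norml => /andP[lo hi].
by apply/andP; split; lra.
Qed.

Definition near_vectors A (eps : R) (p : 'I_d -> R) : set ('I_d -> int) :=
  [set v | tile (lattice_point A v) `&` cball eps p !=set0].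

Lemma near_vectors_bounded_rows A (D : R) (p : 'I_d -> R) v w (k : 'I_d) : reclusive A ->
  near_vectors A (D / 2) p v -> near_vectors A (D / 2) p w ->
  `|((v k - w k)%:~R : R) + tail A (fun j => v j - w j) k k.+1| < 1 + D.
Proof.
move=> rA [x [tx px]] [y [ty py]].
rewrite -(reclusive_lattice_point _ _ rA) -lattice_pointB; apply: (tile_close tx ty).
have := px k; have := py k; rewrite !ler_norml => /andP[? ?] /andP[? ?].
by apply/andP; split; lra.
Qed.

Lemma near_vectors_card_le A (D : R) (p : 'I_d -> R) : reclusive A -> reclusive_gap A D ->
  near_vectors A (D / 2) p #<= `I_d.+1.
Proof.
move=> rA gapAD; apply: alternating_card_le => [v w Sv Sw j|v w Sv Sw k f kf agree wvf].
  exact: bounded_rows_abs_le1 gapAD (fun k => near_vectors_bounded_rows k rA Sv Sw) j.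
suff : v k - w k <= 0 by lia.
apply: (bounded_rows_alternate gapAD (fun k => near_vectors_bounded_rows k rA Sv Sw) kf).
  by rewrite subr_gt0.
by move=> j /agree ->; rewrite subrr.
Qed.
End Tiles.

Theorem mainTheorem10 (R : realType) (d : nat) (A : 'M[R]_d) :
  reclusive A ->
  forall p : 'I_d -> R,
    neighbours A (fine (rdist A) / 2) p #<= `I_(d.+1).
Proof.
move=> rA p.
apply: card_le_trans (near_vectors_card_le p rA (reclusive_gap_rdist rA)).
apply: (card_le_trans _ (card_image_le (fun v => tile (lattice_point A v)) _)).

apply: subset_card_le => X [[a [v ->] ->] meets].
by exists v.
Qed.
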